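(* Let $k\ge3$ and let $\sigma=\sigma_1\varepsilon_1\sigma_2\cdots\varepsilon_{k-1}\sigma_k$ be a generalized pattern of length $k$ such that for some $i$ both $\varepsilon_i$ and $\varepsilon_{i+1}$ are empty (i.e., $\sigma$ has three consecutive elements $\sigma_i\sigma_{i+1}\sigma_{i+2}$ with no dash between them). Then there exist constants $0<c,d<1$ such that $c^n n!<\alpha_n(\sigma)<d^n n!$ for all $n\ge k$.
   Context: $\mathfrak S_n$ is the symmetric group on $\{1,\dots,n\}$, permutations written in one-line notation. A generalized pattern of length $m$ is a permutation $\sigma_1\cdots\sigma_m\in\mathfrak S_m$ together with, for each $j=1,\dots,m-1$, a symbol $\varepsilon_j$ which is either a dash ''-'' or empty; write it $\sigma_1\varepsilon_1\sigma_2\cdots\varepsilon_{m-1}\sigma_m$. A permutation $\pi\in\mathfrak S_n$ contains this pattern if there are indices $i_1<\dots<i_m$ such that (i) whenever $\varepsilon_j$ is empty, $i_{j+1}=i_j+1$, and (ii) for all $a,b$, $\pi_{i_a}<\pi_{i_b}$ iff $\sigma_a<\sigma_b$; otherwise $\pi$ avoids it. $\alpha_n(\sigma)$ is the number of permutations in $\mathfrak S_n$ avoiding $\sigma$. *)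

From HB Require Import structures.
From mathcomp Require Import all_boot all_order all_algebra all_fingroup.
From mathcomp Require Import reals.
Set Implicit Arguments. Unset Strict Implicit. Unset Printing Implicit Defensive.

(* A generalized pattern of length k is a pair (sigma, eps) with
   sigma : 'S_k (one-line notation sigma_1 ... sigma_k, 0-based values)
   eps : nat -> bool, where eps j = true means that the symbol between
   positions j and j+1 (0-based, j < k-1) is EMPTY (no dash), and
   eps j = false means it is a dash. Values eps j for j >= k-1 are irrelevant. *)

Definition gp_contains (n k : nat) (pi : 'S_n) (sigma : 'S_k) (eps : nat -> bool)
  : bool :=
  [exists f : {ffun 'I_k -> 'I_n},
     [forall a : 'I_k, forall b : 'I_k,
        [&& ((val a < val b) ==> (val (f a) < val (f b))),
            ((val b == (val a).+1) && eps (val a)) ==> (val (f b) == (val (f a)).+1)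
          & ((val (pi (f a)) < val (pi (f b))) == (val (sigma a) < val (sigma b)))]]].

Definition alpha (n k : nat) (sigma : 'S_k) (eps : nat -> bool) : nat :=
  #|[set pi : 'S_n | ~~ gp_contains pi sigma eps]|.

(* For the upper bound, cut the positions into n %/ k blocks of k consecutive
   positions.  An occurrence of sigma on consecutive positions is an occurrence
   of the generalized pattern whatever its dashes, so an avoider orders no block
   like sigma.  Permuting the values inside one block acts freely and leaves the
   other blocks alone; in each orbit exactly one permutation orders the block
   like sigma, so alpha_n <= ((k! - 1) / k!) ^ (n %/ k) * n!.
   For the lower bound, split the positions into their residue classes mod 3
   and require all values on one class to lie below all values on another,
   for a cyclic order of the classes chosen so that three consecutive positions
   always have a number of cyclic ascents (1 or 2) different from that of
   sigma_i sigma_(i+1) sigma_(i+2).  These permutations avoid sigma and there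
   are n_0! n_1! n_2! >= n! / 4 ^ n of them. *)

From mathcomp Require Import all_boot all_order all_algebra all_fingroup.
From mathcomp Require Import reals.
From mathcomp Require Import zify lra.
Import GRing.Theory Num.Theory Order.TTheory.
Set Implicit Arguments. Unset Strict Implicit. Unset Printing Implicit Defensive.

Section OrderedAs.
Variable n : nat.
Implicit Types (B : {set 'I_n}) (kap : 'I_n -> nat) (p g : 'S_n).

(* The product [g * p] is [p] precomposed with [g]: for [perm_on B g] it
   shuffles the values of [p] on the positions in [B] and fixes the others. *)
Definition ordered_as B kap p : bool :=
  [forall x in B, forall y in B, (val (p x) < val (p y)) == (kap x < kap y)].

Definition rank_in B kap x := #|[set y in B | kap y < kap x]|.

Lemma rank_in_lt B kap x y : x \in B -> kap x < kap y -> rank_in B kap x < rank_in B kap y.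
Proof.
move=> xB lt_xy; apply: proper_card; apply/properP; split.
  by apply/subsetP=> z; rewrite !inE => /andP[-> /ltn_trans]; apply.
by exists x; rewrite !inE xB ?lt_xy // ltnn.
Qed.

Lemma rank_in_lt_card B kap x : x \in B -> rank_in B kap x < #|B|.
Proof.
move=> xB; apply: proper_card; apply/properP; split.
  by apply/subsetP=> z; rewrite !inE => /andP[].
by exists x; rewrite // !inE ltnn andbF.
Qed.

Lemma ltn_rank_in B kap : {in B &, injective kap} ->
  {in B &, forall x y, (rank_in B kap x < rank_in B kap y) = (kap x < kap y)}.
Proof.
move=> kap_inj x y xB yB; case: (ltngtP (kap x) (kap y)) => [lt_xy|lt_yx|eq_xy].
- by rewrite rank_in_lt.
- by apply/negbTE; rewrite -leqNgt ltnW // rank_in_lt.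
- by rewrite (kap_inj x y xB yB eq_xy) ltnn.
Qed.

Lemma rank_in_inj B kap : {in B &, injective kap} -> {in B &, injective (rank_in B kap)}.
Proof.
move=> kap_inj x y xB yB eq_rank; apply: (kap_inj x y xB yB).
case: (ltngtP (kap x) (kap y)) => // [lt_xy|lt_yx].
  by move: (rank_in_lt xB lt_xy); rewrite eq_rank ltnn.
by move: (rank_in_lt yB lt_yx); rewrite eq_rank ltnn.
Qed.

Lemma rank_in_surj B kap i : {in B &, injective kap} -> i < #|B| ->
  exists2 y, y \in B & rank_in B kap y = i.
Proof.
move=> kap_inj lt_iB.
have uniq_ranks : uniq (map (rank_in B kap) (enum B)).
  by rewrite map_inj_in_uniq ?enum_uniq // => x y; rewrite !mem_enum; apply: rank_in_inj.
have sub_ranks : {subset map (rank_in B kap) (enum B) <= iota 0 #|B|}.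
  by move=> z /mapP[y]; rewrite mem_enum mem_iota => yB ->; rewrite rank_in_lt_card.
have [|_ ranksE] := uniq_min_size uniq_ranks sub_ranks.
  by rewrite size_iota size_map -cardE.
have : i \in iota 0 #|B| by rewrite mem_iota.
by rewrite -ranksE => /mapP[y]; rewrite mem_enum => yB ->; exists y.
Qed.

Lemma perm_val_inj p : injective (val \o p).
Proof. exact: inj_comp val_inj perm_inj. Qed.

Definition rank_transport B kap p x :=
  if x \in B then odflt x [pick y in B | rank_in B (val \o p) y == rank_in B kap x]
  else x.

Lemma rank_transport_out B kap p x : x \notin B -> rank_transport B kap p x = x.
Proof. by rewrite /rank_transport => /negbTE ->. Qed.

Lemma rank_transportP B kap p x : {in B &, injective kap} -> x \in B ->
  rank_transport B kap p x \in B /\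
  rank_in B (val \o p) (rank_transport B kap p x) = rank_in B kap x.
Proof.
move=> kap_inj xB; rewrite /rank_transport xB; case: pickP => [y /andP[yB /eqP] //|none].
have [y yB rank_y] := rank_in_surj (in2W (@perm_val_inj p)) (rank_in_lt_card kap xB).
by move: (none y); rewrite yB rank_y eqxx.
Qed.

Lemma rank_transport_inj B kap p : {in B &, injective kap} ->
  injective (rank_transport B kap p).
Proof.
move=> kap_inj x y eq_xy.
have [xB|xB] := boolP (x \in B); have [yB|yB] := boolP (y \in B).
- have [_ rank_x] := rank_transportP p kap_inj xB.
  have [_ rank_y] := rank_transportP p kap_inj yB.
  by apply: (rank_in_inj kap_inj xB yB); rewrite -rank_x -rank_y eq_xy.
- have [] := rank_transportP p kap_inj xB.
  by rewrite eq_xy rank_transport_out // (negbTE yB).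
- have [] := rank_transportP p kap_inj yB.
  by rewrite -eq_xy rank_transport_out // (negbTE xB).
- by move: eq_xy; rewrite !rank_transport_out.
Qed.

Lemma exists_ordered_as B kap p : {in B &, injective kap} ->
  exists2 g, perm_on B g & ordered_as B kap (g * p)%g.
Proof.
move=> kap_inj; exists (perm (rank_transport_inj (p := p) kap_inj)).
  apply/subsetP=> x; rewrite inE permE; apply: contraR => xB.
  by rewrite rank_transport_out ?eqxx.
apply/forallP=> x; apply/implyP=> xB; apply/forallP=> y; apply/implyP=> yB.
have [gxB rank_gx] := rank_transportP p kap_inj xB.
have [gyB rank_gy] := rank_transportP p kap_inj yB.
rewrite !permM !permE -(ltn_rank_in (B := B) (in2W (@perm_val_inj p))) //.
by rewrite rank_gx rank_gy ltn_rank_in.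
Qed.

Lemma ordered_as_rank B kap p g : perm_on B g -> ordered_as B kap (g * p)%g ->
  {in B, forall x, rank_in B (val \o p) (g x) = rank_in B kap x}.
Proof.
move=> gB /forallP ord x xB.
have -> : rank_in B kap x = #|[set y in B | val (p (g y)) < val (p (g x))]|.
  apply: eq_card => y; rewrite !inE; have [yB|//] := boolP (y \in B).
  by move: (ord y); rewrite yB => /forallP /(_ x); rewrite xB !permM => /eqP ->.
rewrite /rank_in -[in RHS](card_imset _ (@perm_inj _ g)); apply: eq_card => z.
rewrite inE; apply/andP/imsetP => [[zB lt_z]|[y]].
  exists (g^-1 z)%g; last by rewrite permKV.
  by rewrite inE (perm_closed _ (perm_onV gB)) zB permKV.
by rewrite inE => /andP[yB lt_y] ->; rewrite perm_closed.
Qed.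

Lemma ordered_as_uniq B kap p g1 g2 : {in B &, injective kap} ->
  perm_on B g1 -> perm_on B g2 ->
  ordered_as B kap (g1 * p)%g -> ordered_as B kap (g2 * p)%g -> g1 = g2.
Proof.
move=> kap_inj g1B g2B ord1 ord2; apply/permP=> x.
have [xB|xB] := boolP (x \in B); last by rewrite (out_perm g1B) ?(out_perm g2B).
apply: (rank_in_inj (B := B) (in2W (@perm_val_inj p))); rewrite ?perm_closed //.
by rewrite (ordered_as_rank g1B ord1) // (ordered_as_rank g2B ord2).
Qed.

Lemma card_ordered_as B kap (P : pred 'S_n) : {in B &, injective kap} ->
  (forall g p, perm_on B g -> P p -> P (g * p)%g) ->
  #|[set p | P p]| = #|[set p | P p && ordered_as B kap p]| * #|B|`!.
Proof.
move=> kap_inj P_perm; set M := [set p | _ && _].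
have <- : #|[set g : 'S_n | perm_on B g]| = #|B|`!.
  by rewrite -card_perm; apply: eq_card => g; rewrite inE.
rewrite -cardsX.
have mul_inj : {in setX M [set g | perm_on B g] &, injective (fun q => q.2 * q.1)%g}.
  move=> [p1 g1] [p2 g2]; rewrite !inE /= => /andP[/andP[_ ord1] g1B].
  move=> /andP[/andP[_ ord2] g2B] eq_gp.
  have /invg_inj eq_g : (g1^-1 = g2^-1)%g.
    apply: (@ordered_as_uniq B kap (g1 * p1)%g _ _ kap_inj (perm_onV g1B) (perm_onV g2B)).
      by rewrite mulKg.
    by rewrite eq_gp mulKg.
  by move: eq_gp; rewrite eq_g => /mulgI ->.
rewrite -(card_in_imset mul_inj); apply: eq_card => p; rewrite [in LHS]inE.
apply/idP/imsetP => [Pp|[[p1 g1]]].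
  have [g gB ord_gp] := exists_ordered_as p kap_inj.
  exists ((g * p)%g, (g^-1)%g); last by rewrite /= mulKg.
  by rewrite !inE ord_gp perm_onV // andbT P_perm.
by rewrite !inE /= => /andP[/andP[Pp1 _] g1B] ->; apply: P_perm.
Qed.

Lemma ordered_as_perm_disjoint B B' kap g p : [disjoint B & B'] -> perm_on B' g ->
  ordered_as B kap (g * p)%g = ordered_as B kap p.
Proof.
move=> disBB' gB'; have g_fix : {in B, forall x, g x = x}.
  by move=> x xB; apply: (out_perm gB'); rewrite (disjointFr disBB' xB).
apply: eq_forallb_in => x xB; apply: eq_forallb_in => y yB.
by rewrite !permM !g_fix.
Qed.

Lemma card_ordered_as_blocks (Bs : seq {set 'I_n}) (P : pred 'S_n) :
  pairwise (fun A B => [disjoint A & B]) Bs ->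
  (forall B g p, B \in Bs -> perm_on B g -> P p -> P (g * p)%g) ->
  (exists p, P p && all (fun B => ordered_as B val p) Bs) ->
  \prod_(B <- Bs) #|B|`! <= #|[set p | P p]|.
Proof.
elim: Bs P => [|B Bs IH] P /= disBs P_perm [p /andP[Pp ord_p]].
  by rewrite big_nil card_gt0; apply/set0Pn; exists p; rewrite inE.
move: disBs => /andP[/allP disB disBs].
rewrite big_cons (card_ordered_as (B := B) (in2W val_inj)); last first.
  by move=> g q; apply: P_perm; rewrite mem_head.
rewrite [leqRHS]mulnC leq_mul2l IH ?orbT //.
- move=> B' g q B'Bs gB' /andP[Pq ord_q].
  have B'_in : B' \in B :: Bs by rewrite inE B'Bs orbT.
  by rewrite (P_perm B') // (ordered_as_perm_disjoint _ _ (disB _ B'Bs) gB').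
- by move: ord_p => /andP[ord_pB ord_pBs]; exists p; rewrite Pp ord_pB.
Qed.

End OrderedAs.

Section BlockUpperBound.
Variables (n k : nat) (sigma : 'S_k) (eps : nat -> bool).

Definition block t : {set 'I_n} := [set x : 'I_n | t * k <= x < t * k + k].

Definition block_pattern t (x : 'I_n) : nat :=
  if insub (val x - t * k) : option 'I_k is Some a then val (sigma a) else 0.

Lemma block_pattern_inj t : {in block t &, injective (block_pattern t)}.
Proof.
move=> x y; rewrite !inE => /andP[lx ux] /andP[ly uy].
have [ltx lty] : x - t * k < k /\ y - t * k < k by lia.
rewrite /block_pattern; case: insubP => [a _ aE|/negP//]; case: insubP => [b _ bE|/negP//].
move=> /val_inj /perm_inj eq_ab; apply: val_inj; move: aE bE; rewrite eq_ab /=; lia.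
Qed.

Lemma block_pos_proof t (Ht : t * k + k <= n) (a : 'I_k) : t * k + a < n.
Proof. by apply: leq_trans Ht; rewrite ltn_add2l. Qed.

Definition block_pos t Ht a : 'I_n := Ordinal (@block_pos_proof t Ht a).

Lemma block_patternE t Ht a : block_pattern t (@block_pos t Ht a) = val (sigma a).
Proof. by rewrite /block_pattern /= addKn valK. Qed.

Lemma mem_block_pos t Ht a : @block_pos t Ht a \in block t.
Proof. by rewrite inE /= leq_addr ltn_add2l ltn_ord. Qed.

Lemma card_block t : t * k + k <= n -> #|block t| = k.
Proof.
move=> Ht; rewrite -[RHS](card_ord k) -(card_imset _ (_ : injective (block_pos Ht))).
  apply: eq_card => x; apply/idP/imsetP => [|[a _ ->]]; last exact: mem_block_pos.
  rewrite inE => /andP[lx ux]; have lt_xk : x - t * k < k by lia.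
  by exists (Ordinal lt_xk); last (apply: val_inj => /=; lia).
by move=> a b /(congr1 val) /= /addnI /val_inj.
Qed.

Lemma gp_contains_block t p (Ht : t * k + k <= n) :
  ordered_as (block t) (block_pattern t) p -> gp_contains p sigma eps.
Proof.
move=> /forallP ord; apply/existsP; exists [ffun a => block_pos Ht a].
apply/forallP=> a; apply/forallP=> b; rewrite !ffunE.
move: (ord (block_pos Ht a)); rewrite mem_block_pos => /forallP /(_ (block_pos Ht b)).
rewrite mem_block_pos !block_patternE /= => ->; rewrite ltn_add2l implybb andbT /=.
by apply/implyP => /andP[/eqP-> _]; rewrite addnS.
Qed.

Fixpoint avoids_blocks j (p : 'S_n) : bool :=
  if j is j'.+1 then avoids_blocks j' p && ~~ ordered_as (block j') (block_pattern j') p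
  else true.

Lemma block_disjoint t j : t < j -> [disjoint block t & block j].
Proof.
move=> lt_tj; have : t.+1 * k <= j * k by rewrite leq_mul2r lt_tj orbT.
rewrite mulSn => le_tj; rewrite -setI_eq0; apply/eqP/setP => x; rewrite !inE.
by apply/negbTE/negP; lia.
Qed.

Lemma avoids_blocks_perm j t g p : j <= t -> perm_on (block t) g ->
  avoids_blocks j (g * p)%g = avoids_blocks j p.
Proof.
move=> le_jt gB; elim: j le_jt => [//|j IH] lt_jt /=.
by rewrite IH ?(ltnW lt_jt) // (ordered_as_perm_disjoint _ _ (block_disjoint lt_jt) gB).
Qed.

Lemma avoids_blocks_of_avoid j p : j * k <= n -> ~~ gp_contains p sigma eps ->
  avoids_blocks j p.
Proof.
elim: j => [//|j IH] le_jk p_avoids /=.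
have Ht : j * k + k <= n by rewrite addnC -mulSn.
rewrite IH ?(leq_trans _ Ht) ?leq_addr //=.
by apply: contra p_avoids; apply: gp_contains_block Ht.
Qed.

Lemma card_avoids_blocksS j : j.+1 * k <= n ->
  #|[set p | avoids_blocks j.+1 p]| * k`! = #|[set p | avoids_blocks j p]| * (k`! - 1).
Proof.
rewrite mulSn addnC => Ht.
have := card_ordered_as (@block_pattern_inj j) (P := avoids_blocks j)
  (fun g p gB => etrans (avoids_blocks_perm p (leqnn j) gB)).
rewrite card_block //.
have := cardsID [set p | ordered_as (block j) (block_pattern j) p] [set p | avoids_blocks j p].
have -> : [set p | avoids_blocks j p] :\: [set p | ordered_as (block j) (block_pattern j) p]
          = [set p | avoids_blocks j.+1 p] by apply/setP=> p; rewrite !inE andbC.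
have -> : [set p | avoids_blocks j p] :&: [set p | ordered_as (block j) (block_pattern j) p]
          = [set p | avoids_blocks j p && ordered_as (block j) (block_pattern j) p].
  by apply/setP=> p; rewrite !inE.
move=> split_a card_a.
by rewrite mulnBr muln1 -{1}split_a mulnDl card_a addKn.
Qed.

Lemma card_avoids_blocks j : j * k <= n ->
  #|[set p | avoids_blocks j p]| * k`! ^ j = (k`! - 1) ^ j * n`!.
Proof.
elim: j => [|j IH] le_jk_n.
  have -> : [set p | avoids_blocks 0 p] = setT by apply/setP=> p; rewrite !inE.
  by rewrite cardsT card_Sn muln1 mul1n.
rewrite expnS mulnA card_avoids_blocksS // mulnAC IH; first by rewrite expnS mulnC mulnA.
by apply: leq_trans le_jk_n; rewrite leq_mul2r leqnSn orbT.
Qed.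

Lemma alpha_upper_bound : 0 < k ->
  alpha n sigma eps * k`! ^ (n %/ k) <= (k`! - 1) ^ (n %/ k) * n`!.
Proof.
move=> k_gt0; rewrite -card_avoids_blocks ?leq_divM // leq_mul2r; apply/orP; right.
apply: subset_leq_card; apply/subsetP => p; rewrite !inE.
exact: avoids_blocks_of_avoid (leq_divM n k).
Qed.

End BlockUpperBound.

Definition cyclic_ascents (u v w : nat) : nat := (u < v) + (v < w) + (w < u).

(* [rev] reverses the cyclic order of the residue classes: they get ranks
   0, 2, 1 instead of 0, 1, 2. *)
Definition class_rank (rev : bool) (r : nat) : nat := if rev then (3 - r) %% 3 else r.

Lemma mod3_cases x : exists2 r, r < 3 & [/\ x %% 3 = r, x.+1 %% 3 = r.+1 %% 3 & x.+2 %% 3 = r.+2 %% 3].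
Proof.
exists (x %% 3); first by rewrite ltn_mod.
split => //.
  by rewrite -[x.+1]addn1 -modnDml addn1.
by rewrite -[x.+2]addn2 -modnDml addn2.
Qed.

Lemma cyclic_ascents_class_rank rev x :
  cyclic_ascents (class_rank rev (x %% 3)) (class_rank rev (x.+1 %% 3))
                 (class_rank rev (x.+2 %% 3)) = if rev then 1 else 2.
Proof.
have [r lt_r3 [-> -> ->]] := mod3_cases x.
by case: r lt_r3 => [|[|[|]]] //; case: rev.
Qed.

Lemma residue_triple x : [/\ x %% 3 != x.+1 %% 3, x.+1 %% 3 != x.+2 %% 3 & x.+2 %% 3 != x %% 3].
Proof. by have [r lt_r3 [-> -> ->]] := mod3_cases x; case: r lt_r3 => [|[|[|]]]. Qed.

Lemma eq_class_rank rev r s : r < 3 -> s < 3 ->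
  (class_rank rev r == class_rank rev s) = (r == s).
Proof. by case: r => [|[|[|]]] //; case: s => [|[|[|]]] //; case: rev. Qed.

Lemma leq_bin_exp2 m j : 'C(m, j) <= 2 ^ m.
Proof.
elim: m j => [|m IH] [|j] //; rewrite ?bin0 ?expn_gt0 //.
by rewrite binS expnS mul2n -addnn leq_add.
Qed.

Lemma leq_fact_add a b : (a + b)`! <= 2 ^ (a + b) * (a`! * b`!).
Proof. by rewrite -{1}(bin_fact (leq_addr b a)) addKn leq_mul2r leq_bin_exp2 orbT. Qed.

Lemma leq_fact_add3 a b c : (a + b + c)`! <= 4 ^ (a + b + c) * (a`! * b`! * c`!).
Proof.
apply: leq_trans (leq_fact_add _ _) _.
rewrite -[4]/(2 * 2) expnMn -mulnA leq_mul // mulnA leq_mul //.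
apply: leq_trans (leq_fact_add a b) _.
by rewrite leq_mul // leq_exp2l // leq_addr.
Qed.

Section ResidueLowerBound.
Variables (n k : nat) (sigma : 'S_k) (eps : nat -> bool).

Definition class_ordered rev (p : 'S_n) : bool :=
  [forall x : 'I_n, forall y : 'I_n, (x %% 3 != y %% 3) ==>
     ((val (p x) < val (p y)) == (class_rank rev (x %% 3) < class_rank rev (y %% 3)))].

Lemma class_ordered_avoids (a b c : 'I_k) p : val b = a.+1 -> val c = b.+1 ->
  eps a -> eps b -> class_ordered (cyclic_ascents (sigma a) (sigma b) (sigma c) == 2) p ->
  ~~ gp_contains p sigma eps.
Proof.
move=> bE cE eps_a eps_b; set s := cyclic_ascents _ _ _ => /forallP ord.
apply/negP => /existsP[f /forallP f_occ].
have f_occ2 (u v : 'I_k) := forallP (f_occ u) v.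
have fb : (f b : nat) = (f a).+1.
  by have /and3P[_ /implyP adj _] := f_occ2 a b; apply/eqP/adj; rewrite bE eqxx eps_a.
have fc : (f c : nat) = (f b).+1.
  by have /and3P[_ /implyP adj _] := f_occ2 b c; apply/eqP/adj; rewrite cE eqxx eps_b.
have sigmaE (u v : 'I_k) : (val (sigma u) < val (sigma v)) = (val (p (f u)) < val (p (f v))).
  by have /and3P[_ _ /eqP ->] := f_occ2 u v.
have classE (x y : 'I_n) : x %% 3 != y %% 3 ->
    (val (p x) < val (p y)) = (class_rank (s == 2) (x %% 3) < class_rank (s == 2) (y %% 3)).
  by move=> neq_xy; move/forallP/(_ y)/implyP/(_ neq_xy)/eqP: (ord x).
have [ne_ab ne_bc ne_ca] := residue_triple (f a).
rewrite -fb -fc in ne_ab ne_bc ne_ca.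
have : s = if s == 2 then 1 else 2.
  rewrite {1}/s /cyclic_ascents !sigmaE (classE _ _ ne_ab) (classE _ _ ne_bc) (classE _ _ ne_ca).
  by rewrite fc fb; apply: cyclic_ascents_class_rank.
by case: eqP => [->|].
Qed.

Definition residue_class r : {set 'I_n} := [set x : 'I_n | x %% 3 == r].

Lemma residue_class_disjoint r s : r != s -> [disjoint residue_class r & residue_class s].
Proof.
move=> neq_rs; rewrite -setI_eq0; apply/eqP/setP => x; rewrite !inE.
by apply/negbTE/negP => /andP[/eqP -> /eqP eq_rs]; rewrite eq_rs eqxx in neq_rs.
Qed.

Lemma card_residue_classes :
  #|residue_class 0| + #|residue_class 1| + #|residue_class 2| = n.
Proof.
have cardE r : #|residue_class r| = \sum_(x < n) (x %% 3 == r).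
  by rewrite -sum1_card big_mkcond; apply: eq_bigr => x _; rewrite inE; case: eqP.
rewrite !cardE -!big_split -[RHS]card_ord -sum1_card; apply: eq_bigr => x _ /=.
by have := ltn_mod x 3; case: (x %% 3) => [|[|[|]]].
Qed.

Lemma perm_on_residue_class r g (x : 'I_n) : perm_on (residue_class r) g ->
  g x %% 3 = x %% 3.
Proof.
move=> gB; have [xB|xB] := boolP (x \in residue_class r); last by rewrite (out_perm gB).
have gxB : g x \in residue_class r by rewrite perm_closed.
by move: xB gxB; rewrite !inE => /eqP -> /eqP ->.
Qed.

Lemma class_ordered_perm rev r g p : perm_on (residue_class r) g ->
  class_ordered rev p -> class_ordered rev (g * p)%g.
Proof.
move=> gB /forallP ord; apply/forallP=> x; apply/forallP=> y; rewrite !permM.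
by move/forallP: (ord (g x)) => /(_ (g y)); rewrite !(perm_on_residue_class _ gB).
Qed.

Definition residue_key rev (x : 'I_n) : nat := class_rank rev (x %% 3) * n + x.

Lemma residue_key_lt rev (x y : 'I_n) :
  class_rank rev (x %% 3) < class_rank rev (y %% 3) -> residue_key rev x < residue_key rev y.
Proof.
move=> lt_xy; have : (class_rank rev (x %% 3)).+1 * n <= class_rank rev (y %% 3) * n.
  by rewrite leq_mul2r lt_xy orbT.
by rewrite /residue_key mulSn; have := ltn_ord x; lia.
Qed.

Lemma residue_key_inj rev : {in setT &, injective (residue_key rev)}.
Proof.
move=> x y _ _ eq_key; apply: val_inj.
have : residue_key rev x %% n = residue_key rev y %% n by rewrite eq_key.
by rewrite /residue_key !modnMDl !modn_small.
Qed.

Lemma exists_class_ordered rev : exists p, class_ordered rev p &&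
  all (fun B => ordered_as B val p) [:: residue_class 0; residue_class 1; residue_class 2].
Proof.
have [g _] := exists_ordered_as 1%g (@residue_key_inj rev); rewrite mulg1 => /forallP ord.
have gE (x y : 'I_n) : (val (g x) < val (g y)) = (residue_key rev x < residue_key rev y).
  by move: (ord x); rewrite in_setT => /forallP /(_ y); rewrite in_setT => /eqP.
have ord_class r : ordered_as (residue_class r) val g.
  apply/forallP=> x; apply/implyP; rewrite inE => /eqP xr.
  by apply/forallP=> y; apply/implyP; rewrite inE => /eqP yr; rewrite gE /residue_key xr yr ltn_add2l.
exists g; rewrite /= !ord_class !andbT.
apply/forallP=> x; apply/forallP=> y; apply/implyP=> neq_xy; rewrite gE.
have : class_rank rev (x %% 3) != class_rank rev (y %% 3) by rewrite eq_class_rank ?ltn_mod.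
case: (ltngtP (class_rank rev (x %% 3)) (class_rank rev (y %% 3))).
- by move=> /residue_key_lt ->.
- by move=> /residue_key_lt lt_yx _; apply/eqP/negbTE; rewrite -leqNgt ltnW.
by [].
Qed.

Lemma card_class_ordered rev :
  #|residue_class 0|`! * #|residue_class 1|`! * #|residue_class 2|`! <=
  #|[set p | class_ordered rev p]|.
Proof.
have := card_ordered_as_blocks _ _ (exists_class_ordered rev).
rewrite !big_cons big_nil muln1 mulnA; apply.
  by rewrite /= !residue_class_disjoint.
by move=> B g p; rewrite !inE => /or3P[] /eqP ->; apply: class_ordered_perm.
Qed.

Lemma alpha_lower_bound : (exists i, i.+2 < k /\ eps i /\ eps i.+1) ->
  n`! <= 4 ^ n * alpha n sigma eps.
Proof.
case=> i [lt_i2k [eps_i eps_i1]].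
pose a := Ordinal (ltnW (ltnW lt_i2k)); pose b := Ordinal (ltnW lt_i2k); pose c := Ordinal lt_i2k.
have := leq_fact_add3 #|residue_class 0| #|residue_class 1| #|residue_class 2|.
rewrite card_residue_classes => /leq_trans; apply; rewrite leq_mul2l; apply/orP; right.
apply: leq_trans (card_class_ordered (cyclic_ascents (sigma a) (sigma b) (sigma c) == 2)) _.
apply: subset_leq_card; apply/subsetP => p; rewrite !inE.
exact: (@class_ordered_avoids a b c).
Qed.

End ResidueLowerBound.

Local Open Scope ring_scope.

Lemma bernoulli_ineq (R : realFieldType) (x : R) (j : nat) : 0 <= x -> x <= 1 ->
  1 - j%:R * x <= (1 - x) ^+ j.
Proof.
move=> x_ge0 x_le1; elim: j => [|j IH]; first by rewrite mul0r subr0 expr0.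
rewrite exprSr; apply: le_trans (ler_wpM2r _ IH); last by rewrite subr_ge0.
have : 0 <= j%:R :> R by [].
by rewrite -natr1; nra.
Qed.

Lemma geometric_lower_bound (R : realFieldType) (n a : nat) : (0 < n)%N ->
  (n`! <= 4 ^ n * a)%N -> 5%:R^-1 ^+ n * n`!%:R < a%:R :> R.
Proof.
move=> n_gt0 le_fact_a.
have a_gt0 : (0 < a)%N.
  by rewrite lt0n; apply: contraTneq le_fact_a => ->; rewrite muln0 -ltnNge fact_gt0.
apply: (@le_lt_trans _ _ ((4%:R / 5%:R) ^+ n * a%:R)).
  rewrite [4%:R / _]mulrC exprMn -mulrA ler_wpM2l ?exprn_ge0 ?invr_ge0 //.
  by rewrite -natrX -natrM ler_nat.
by rewrite -[ltRHS]mul1r ltr_pM2r ?ltr0n // exprn_ilt1 -?lt0n //; lra.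
Qed.

Lemma inv_double_fact_bounds (R : realFieldType) k : (0 < k)%N ->
  0 < (2 * k * k`!)%:R^-1 :> R /\ (2 * k * k`!)%:R^-1 < 1 :> R.
Proof.
move=> k_gt0; have N_gt1 : (1 < 2 * k * k`!)%N.
  by rewrite -mulnA (@leq_trans (2 * 1)) // leq_mul2l muln_gt0 k_gt0 fact_gt0.
have N_gt0 := ltnW N_gt1.
by rewrite invr_gt0 ltr0n N_gt0 invf_lt1 ?ltr0n // ltr1n.
Qed.

Lemma geometric_upper_bound (R : realFieldType) (n k m a : nat) :
  (0 < k)%N -> (n < 2 * k * m)%N -> (a * k`! ^ m <= (k`! - 1) ^ m * n`!)%N ->
  a%:R < (1 - (2 * k * k`!)%:R^-1) ^+ n * n`!%:R :> R.
Proof.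
move=> k_gt0 lt_n_2km le_a.
set K := k`!; have K_gt0 : (0 < K)%N := fact_gt0 k.
have [x_gt0 x_lt1] := inv_double_fact_bounds R k_gt0.
set x : R := (2 * k * K)%:R^-1 in x_gt0 x_lt1 *; set q : R := 1 - K%:R^-1.
have q_ge0 : 0 <= q by rewrite subr_ge0 invf_le1 ?ler1n ?ltr0n.
have a_le : a%:R <= q ^+ m * n`!%:R.
  rewrite -(@ler_pM2r _ (K%:R ^+ m)) ?exprn_gt0 ?ltr0n // mulrAC -exprMn.
  rewrite mulrBl mul1r mulVf ?pnatr_eq0 -?lt0n //.
  by rewrite -natrX -natrM -[1]/(1%:R) -natrB // -natrX -natrM ler_nat.
have q_le : q <= (1 - x) ^+ (2 * k).
  apply: le_trans (bernoulli_ineq _ (ltW x_gt0) (ltW x_lt1)).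
  by rewrite /x (natrM _ (2 * k) K) invfM mulrA mulfV ?mul1r // pnatr_eq0 -lt0n muln_gt0 k_gt0.
apply: (le_lt_trans a_le); rewrite ltr_pM2r ?ltr0n ?fact_gt0 //.
apply: (@le_lt_trans _ _ ((1 - x) ^+ (2 * k * m))).
  by rewrite exprM lerXn2r // nnegrE exprn_ge0 // subr_ge0 ltW.
by rewrite ltr_iXn2l // ?subr_gt0 //; lra.
Qed.

Theorem mainTheorem3 (R : realType) (k : nat) (sigma : 'S_k) (eps : nat -> bool) :
  (3 <= k)%N ->
  (exists i : nat, (i.+2 < k)%N /\ eps i /\ eps i.+1) ->
  exists c d : R, [/\ 0 < c, c < 1, 0 < d, d < 1 &
    forall n : nat, (k <= n)%N ->
      c ^+ n * (n`!)%:R < (alpha n sigma eps)%:R /\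
      (alpha n sigma eps)%:R < d ^+ n * (n`!)%:R].
Proof.
move=> k_ge3 triple; have k_gt0 : (0 < k)%N by apply: leq_trans k_ge3.
have [x_gt0 x_lt1] := inv_double_fact_bounds R k_gt0.
exists 5%:R^-1, (1 - (2 * k * k`!)%:R^-1); split; [lra..|].
move=> n le_kn; have n_gt0 : (0 < n)%N := leq_trans k_gt0 le_kn.
split; first exact: (geometric_lower_bound R n_gt0 (@alpha_lower_bound n k sigma eps triple)).
apply: (geometric_upper_bound R k_gt0 _ (@alpha_upper_bound n k sigma eps k_gt0)).
have := ltn_ceil n k_gt0; have : (k <= n %/ k * k)%N by rewrite leq_pmull // divn_gt0.
by rewrite mulSn; lia.
Qed.
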